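(* Let $Q$ be a query decomposed into $k$ edge-disjoint TC-subqueries $Q^1,\dots,Q^k$ (in a prefix-connected order), and assume that an incoming edge matches each edge of $Q$ with probability $1/d$, where $d$ is the number of distinct edge labels in $Q$. Consider an incoming edge $\sigma$ that matches one or more edges of $Q$. Then the total expected number of join operations for inserting $\sigma$ (in the worst case where every join result is nonempty) is \[ N=\frac{1}{d}\left((|E(Q)|-1)+\frac{k}{2}(k-1)\right). \]
   Context: A query $Q$ has directed labelled edges $E(Q)$ and a strict partial order $\prec$ (timing order) on them. A TC-query (timing-connected query) is one whose edges can be ordered $\epsilon_1,\dots,\epsilon_m$ with every prefix inducing a weakly connected subquery and $\epsilon_j\prec\epsilon_{j+1}$ for all $j$ (its timing sequence). A TC decomposition of $Q$ is a set of pairwise edge-disjoint TC-subqueries $Q^1,\dots,Q^k$ whose union is $Q$, ordered so that each $Q^1\cup\dots\cup Q^i$ is weakly connected. Evaluation model (the joins being counted): for each $Q^i$, matches of each prefix $\{\epsilon_1,\dots,\epsilon_j\}$ of its timing sequence are stored; when an incoming edge matches $\epsilon_1$ of some $Q^i$ no join is performed, and when it matches $\epsilon_j$ with $j>1$ it is joined once with the stored matches of $\{\epsilon_1,\dots,\epsilon_{j-1}\}$. Matches of $Q^1\cup\dots\cup Q^i$ are also stored for each $i$; when new matches of $Q^1$ arise they are joined successively with the matches of $Q^2,\dots,Q^k$ ($k-1$ joins), and when new matches of $Q^i$ with $i>1$ arise they are joined with the stored matches of $Q^1\cup\dots\cup Q^{i-1}$ and then successively with $Q^{i+1},\dots,Q^k$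 ($k-i+1$ joins). Edge labels here combine the edge label and the labels of its endpoints. *)

From mathcomp Require Import all_boot all_order all_algebra.
Set Implicit Arguments. Unset Strict Implicit. Unset Printing Implicit Defensive.
Import GRing.Theory Num.Theory.

Section Query.
(* A query Q: vertex type V, edge set E(Q) (a finite type), endpoints,
   (combined) labels and a timing relation [prec]. *)
Variables (V E : finType) (L : eqType).
Variables (src tgt : E -> V) (lab : E -> L) (prec : rel E).

Definition strict_partial_order :=
  irreflexive prec /\ transitive prec.

Definition edge_adj (e f : E) : bool :=
  [|| src e == src f, src e == tgt f, tgt e == src f | tgt e == tgt f].

Definition weakly_connected (S : {set E}) : bool :=
  [forall e in S, forall f in S,
     connect [rel x y | [&& x \in S, y \in S & edge_adj x y]] e f].

(* s is the timing sequence of a TC-query (its edge set is [set x in s]) *)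
Definition tc_sequence (s : seq E) : bool :=
  [&& s != [::], uniq s,
      all (fun i => weakly_connected [set x in take i s]) (iota 1 (size s))
    & sorted prec s].

(* A TC decomposition, each TC-subquery Q^i given by its timing sequence;
   D = [:: Q^1; ...; Q^k]. *)
Definition tc_decomposition (D : seq (seq E)) : Prop :=
  [/\ all tc_sequence D,
      perm_eq (flatten D) (enum E)  (* pairwise edge-disjoint, union = Q *)
    & forall i, 0 < i <= size D ->
        weakly_connected [set x in flatten (take i D)]].

Definition num_labels : nat := size (undup (map lab (enum E))).

(* With Q^i (0-based index i0) containing e at 0-based position j:
   - one join inside Q^i if j > 0;
   - if e is the last edge of the timing sequence of Q^i, new matches of Q^i
     arise, giving k-1 joins if i0 = 0 (i = 1) and k-i+1 = k-i0 joins
     otherwise. *)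
Definition joins_of_edge (D : seq (seq E)) (e : E) : nat :=
  let k := size D in
  let i0 := find (fun s => e \in s) D in
  let s := nth [::] D i0 in
  (0 < index e s) +
  (if e == last e s then (if i0 == 0 then k.-1 else k - i0) else 0).

(* expected number of joins when each edge of Q is matched by the incoming
   edge with probability p e (linearity of expectation). *)
Definition expected_joins (p : E -> rat) (D : seq (seq E)) : rat :=
  \sum_(e : E) p e * (joins_of_edge D e)%:R.

End Query.

(** An edge at position j > 0 of the timing sequence of its subquery costs one
    join, which over all edges gives |E(Q)| - k joins; the last edge of Q^i
    additionally costs k - 1 joins for i = 1 and k - i + 1 joins for i > 1,
    and these add up to (k - 1) + k(k - 1)/2.  Linearity of expectation with
    the uniform matching probability 1/d finishes the computation; neither the
    timing order nor connectivity enters the count. *)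

From mathcomp Require Import all_boot all_order all_algebra.
Set Implicit Arguments. Unset Strict Implicit. Unset Printing Implicit Defensive.
Import GRing.Theory Num.Theory.

Lemma find_mem_nth_flatten (T : eqType) (D : seq (seq T)) (i : nat) (e : T) :
  uniq (flatten D) -> i < size D -> e \in nth [::] D i ->
  find (fun s => e \in s) D = i.
Proof.
elim: D i => [|s D IH] [|i] //= uD ltiD e_Di; first by rewrite e_Di.
move: uD; rewrite cat_uniq => /and3P[_ s_disj_D uD].
have e_D : e \in flatten D by apply/flattenP; exists (nth [::] D i); rewrite ?mem_nth.
have -> : (e \in s) = false.
  by apply: contraNF s_disj_D => e_s; apply/hasP; exists e.
by rewrite (IH i).
Qed.

Lemma uniq_flatten_mem (T : eqType) (D : seq (seq T)) (s : seq T) :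
  uniq (flatten D) -> s \in D -> uniq s.
Proof.
elim: D => //= t D IH; rewrite cat_uniq in_cons => /and3P[ut _ uD].
by case/predU1P=> [-> // | s_D]; apply: IH.
Qed.

Lemma sum_index_gt0 (T : eqType) (s : seq T) :
  uniq s -> \sum_(e <- s) (0 < index e s) = (size s).-1.
Proof.
case: s => [|x s] /=; first by rewrite big_nil.
case/andP=> x_notin_s _; rewrite big_cons eqxx add0n -sum1_size.
apply: eq_big_seq => e e_s /=.
by rewrite ifN //; apply: contraNneq x_notin_s => ->.
Qed.

Lemma sum_eq_last (T : eqType) (s : seq T) (c : nat) :
  uniq s -> s != [::] -> \sum_(e <- s) (if e == last e s then c else 0) = c.
Proof.
case/lastP: s => [|s x] // + _; rewrite rcons_uniq => /andP[x_notin_s _].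
rewrite big_rcons last_rcons eqxx big_seq big1 ?addn0 // => e e_s.
by rewrite last_rcons ifN //; apply: contraNneq x_notin_s => <-.
Qed.

Lemma sum_pred_size (T : eqType) (D : seq (seq T)) :
  all (fun s => s != [::]) D ->
  \sum_(s <- D) (size s).-1 + (size D).-1 = (size (flatten D)).-1.
Proof.
case: D => [|s D] /=; first by rewrite big_nil.
rewrite big_cons size_cat -addnA; case/andP=> s_nonempty D_nonempty.
suff -> : \sum_(t <- D) (size t).-1 + size D = size (flatten D).
  by case: s s_nonempty.
elim: D D_nonempty => [|t D IH] /=; first by rewrite big_nil.
case/andP=> t_nonempty /IH {}IH; rewrite big_cons size_cat -IH.
by case: t t_nonempty => //= x t _; rewrite addnS addnA.
Qed.

(* [i] is the 0-based index of the subquery whose new matches are joined. *)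
Definition new_match_joins (k i : nat) : nat := if i == 0 then k.-1 else k - i.

Lemma sum_new_match_joins (k : nat) :
  \sum_(0 <= i < k) new_match_joins k i = k.-1 + 'C(k, 2).
Proof.
case: k => [|n]; first by rewrite big_geq.
rewrite big_nat_recl // /=; congr (_ + _).
rewrite -bin2_sum big_rev_mkord subn0 big_nat_recl // big_mkord.
apply: eq_bigr => i _; rewrite /new_match_joins /= subSS subKn //.
Qed.

Lemma sum_joins_of_edge (E : finType) (D : seq (seq E)) :
  uniq (flatten D) -> all (fun s => s != [::]) D ->
  \sum_(e <- flatten D) joins_of_edge D e =
    (size (flatten D)).-1 + 'C(size D, 2).
Proof.
move=> uD D_nonempty.
have block_sum i : 0 <= i < size D ->
    \sum_(e <- nth [::] D i) joins_of_edge D e =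
      (size (nth [::] D i)).-1 + new_match_joins (size D) i.
  move=> /= ltiD; have Di_D := mem_nth [::] ltiD.
  have uDi := uniq_flatten_mem uD Di_D.
  rewrite -(sum_index_gt0 uDi) -(sum_eq_last (new_match_joins (size D) i) uDi);
    last exact: (allP D_nonempty).
  rewrite -big_split; apply: eq_big_seq => e e_Di.
  by rewrite /joins_of_edge (find_mem_nth_flatten uD ltiD e_Di).
rewrite big_flatten (big_nth [::]) (eq_big_nat _ _ block_sum) big_split /=.
rewrite sum_new_match_joins -(big_nth [::] xpredT (fun s => (size s).-1)) addnA.
by rewrite (sum_pred_size D_nonempty).
Qed.

Local Open Scope ring_scope.

Lemma natr_bin2 (R : numFieldType) (n : nat) :
  'C(n, 2)%:R = n%:R / 2 * (n%:R - 1) :> R.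
Proof.
case: n => [|n]; first by rewrite bin0n !mul0r.
have two_bin2 : (2 * 'C(n.+1, 2) = n.+1 * n)%N by rewrite -mul_bin_diag bin1.
by rewrite -natr1 addrK natr1 mulrAC -natrM -two_bin2 natrM mulrC mulKf ?pnatr_eq0.
Qed.

Lemma expected_joins_const (E : finType) (D : seq (seq E)) (p : E -> rat) (c : rat) :
  (forall e, p e = c) ->
  expected_joins p D = c * (\sum_(e : E) joins_of_edge D e)%:R.
Proof.
by move=> p_const; rewrite natr_sum big_distrr; apply: eq_bigr => e _; rewrite p_const.
Qed.

Lemma tc_decomposition_sum_joins (V E : finType) (src tgt : E -> V) (prec : rel E)
    (D : seq (seq E)) :
  tc_decomposition src tgt prec D ->
  (\sum_(e : E) joins_of_edge D e = #|E|.-1 + 'C(size D, 2))%N.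
Proof.
case=> /allP tcD permD _.
have uD : uniq (flatten D) by rewrite (perm_uniq permD) enum_uniq.
have D_nonempty : all (fun s => s != [::]) D by apply/allP=> s /tcD /and4P[].
have flatD_enum : perm_eq (flatten D) (index_enum E).
  apply: uniq_perm uD (index_enum_uniq E) _ => e.
  by rewrite mem_index_enum (perm_mem permD) mem_enum.
by rewrite -(perm_big _ flatD_enum) sum_joins_of_edge // (perm_size permD) -cardE.
Qed.

Theorem theorem7 (V E : finType) (L : eqType)
  (src tgt : E -> V) (lab : E -> L) (prec : rel E)
  (D : seq (seq E)) (p : E -> rat) :
  strict_partial_order prec ->
  tc_decomposition src tgt prec D ->
  (forall e : E, p e = ((num_labels lab)%:R)^-1) ->
  expected_joins p D =
    ((num_labels lab)%:R)^-1 *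
      ((#|E|%:R - 1) + (size D)%:R / 2 * ((size D)%:R - 1)).
Proof.
move=> _ tcD p_uniform.
rewrite (expected_joins_const _ p_uniform) (tc_decomposition_sum_joins tcD).
have [E_empty | E_nonempty] := posnP #|E|.
  (* Then d = 0, and both sides vanish because 0^-1 = 0. *)
  move: E_empty; rewrite cardE => /size0nil enumE0.
  by rewrite /num_labels enumE0 invr0 !mul0r.
by rewrite natrD natr_bin2 -subn1 natrB.
Qed.
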